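(* Let $F,G:\mathbf{Set}\to\mathbf{Set}$ be endofunctors. Let $(\mu_i)_{i\in I}$ be a set of unary predicate liftings for $G$ that is mutually surjective on singletons, and let $(\lambda_j)_{j\in J}$ be a separating set of unary predicate liftings for $F$ that separates by singletons. Then the predicate liftings $(\mu_i;\lambda_j)$ for $F\circ G$, $i\in I$, $j\in J$, defined by $(\mu_i;\lambda_j)_X(U)=(\lambda_j)_{GX}((\mu_i)_X(U))$, form a separating set for $F\circ G$.
   Context: A unary predicate lifting for an endofunctor $T$ of $\mathbf{Set}$ is a family of maps $\lambda_X:\mathcal{P}(X)\to\mathcal{P}(TX)$ with $(Tf)^{-1}(\lambda_Y(V))=\lambda_X(f^{-1}(V))$ for all $f:X\to Y$, $V\subseteq Y$. A set $\Lambda$ of unary predicate liftings for $T$ is separating if for every set $X$ and all $x,y\in TX$ with $x\neq y$ there are $\lambda\in\Lambda$ and $U\subseteq X$ such that exactly one of $x,y$ lies in $\lambda_X(U)$. $\Lambda$ separates by singletons if for every set $X$ and all $x\neq y$ in $TX$ there are $\lambda\in\Lambda$ and an element $t\in X$ such that exactly one of $x,y$ lies in $\lambda_X(\{t\})$. $\Lambda$ is mutually surjective on singletons if for every set $X$ and every $t\in TX$ there are $\lambda\in\Lambda$ and $U\subseteq X$ with $\lambda_X(U)=\{t\}$. *)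

From Stdlib Require Import FunctionalExtensionality.

(* Set is modelled by Rocq's Type; subsets of X by predicates X -> Prop. *)

Record SetFunctor := {
  fobj : Type -> Type;
  fmap : forall (X Y : Type), (X -> Y) -> fobj X -> fobj Y;
  fmap_id : forall (X : Type) (t : fobj X), fmap X X (fun x => x) t = t;
  fmap_comp : forall (X Y Z : Type) (f : X -> Y) (g : Y -> Z) (t : fobj X),
      fmap X Z (fun x => g (f x)) t = fmap Y Z g (fmap X Y f t)
}.

Arguments fmap s {X Y} _ _.

Definition PredFamily (T : SetFunctor) :=
  forall X : Type, (X -> Prop) -> (fobj T X -> Prop).

Definition is_pred_lifting (T : SetFunctor) (lam : PredFamily T) : Prop :=
  forall (X Y : Type) (f : X -> Y) (V : Y -> Prop) (t : fobj T X),
    lam Y V (fmap T f t) <-> lam X (fun x => V (f x)) t.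

Definition exactly_one (P Q : Prop) : Prop := (P /\ ~ Q) \/ (~ P /\ Q).

Definition separating (T : SetFunctor) (K : Type) (lam : K -> PredFamily T) : Prop :=
  forall (X : Type) (x y : fobj T X), x <> y ->
    exists (k : K) (U : X -> Prop), exactly_one (lam k X U x) (lam k X U y).

Definition separates_by_singletons (T : SetFunctor) (K : Type) (lam : K -> PredFamily T) : Prop :=
  forall (X : Type) (x y : fobj T X), x <> y ->
    exists (k : K) (t : X),
      exactly_one (lam k X (fun z => z = t) x) (lam k X (fun z => z = t) y).

Definition mutually_surjective_on_singletons (T : SetFunctor) (K : Type)
    (lam : K -> PredFamily T) : Prop :=
  forall (X : Type) (t : fobj T X),
    exists (k : K) (U : X -> Prop), forall s : fobj T X, lam k X U s <-> s = t.

Definition comp_functor (F G : SetFunctor) : SetFunctor.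
Proof.
  refine {| fobj := fun X => fobj F (fobj G X);
            fmap := fun X Y f => fmap F (fmap G f) |}.
  - intros X t.
    transitivity (fmap F (fun x => x) t).
    + f_equal. apply functional_extensionality. intro u. apply fmap_id.
    + apply fmap_id.
  - intros X Y Z f g t.
    rewrite <- fmap_comp. f_equal.
    apply functional_extensionality. intro u. apply fmap_comp.
Defined.

Definition comp_lifting (F G : SetFunctor) (mu : PredFamily G) (lam : PredFamily F)
  : PredFamily (comp_functor F G) :=
  fun X U => lam (fobj G X) (mu X U).

From Stdlib Require Import FunctionalExtensionality PropExtensionality.

(* Naturality of the composite lifting is naturality of lambda at [G f]
   followed by naturality of mu.  For separation, given x <> y in F(GX), some
   lambda_j separates them by a singleton {t} with t in GX; surjectivity on
   singletons writes {t} = mu_i(U), so (mu_i;lambda_j)_X(U) = lambda_j({t})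
   separates x and y. *)

Lemma pred_ext (X : Type) (P Q : X -> Prop) :
  (forall x, P x <-> Q x) -> P = Q.
Proof.
  intro PQ. apply functional_extensionality; intro x.
  apply propositional_extensionality, PQ.
Qed.

Lemma comp_lifting_is_pred_lifting (F G : SetFunctor)
    (mu : PredFamily G) (lam : PredFamily F) :
  is_pred_lifting G mu -> is_pred_lifting F lam ->
  is_pred_lifting (comp_functor F G) (comp_lifting F G mu lam).
Proof.
  intros mu_nat lam_nat X Y f V t; unfold comp_lifting; simpl.
  change (lam (fobj G Y) (mu Y V) (fmap F (fmap G f) t) <->
          lam (fobj G X) (mu X (fun x => V (f x))) t).
  rewrite (lam_nat _ _ (fmap G f) (mu Y V) t).
  replace (fun u => mu Y V (fmap G f u)) with (mu X (fun x => V (f x))).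
  - reflexivity.
  - apply pred_ext; intro u. symmetry. apply mu_nat.
Qed.

Lemma comp_lifting_separating (F G : SetFunctor) (I J : Type)
    (mu : I -> PredFamily G) (lam : J -> PredFamily F) :
  mutually_surjective_on_singletons G I mu ->
  separates_by_singletons F J lam ->
  separating (comp_functor F G) (I * J)
    (fun ij => comp_lifting F G (mu (fst ij)) (lam (snd ij))).
Proof.
  intros mu_surj lam_sing X x y xy.
  destruct (lam_sing (fobj G X) x y xy) as [j [t sep_t]].
  destruct (mu_surj X t) as [i [U muU]].
  exists (i, j), U; unfold comp_lifting; simpl.
  replace (mu i X U) with (fun s => s = t) by (symmetry; apply pred_ext, muU).
  exact sep_t.
Qed.

Theorem mainTheorem8 (F G : SetFunctor) (I J : Type)
    (mu : I -> PredFamily G) (lam : J -> PredFamily F)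
    (Hmu_lift : forall i : I, is_pred_lifting G (mu i))
    (Hlam_lift : forall j : J, is_pred_lifting F (lam j))
    (Hmu_surj : mutually_surjective_on_singletons G I mu)
    (Hlam_sep : separating F J lam)
    (Hlam_sing : separates_by_singletons F J lam) :
  (forall (ij : I * J),
      is_pred_lifting (comp_functor F G) (comp_lifting F G (mu (fst ij)) (lam (snd ij))))
  /\ separating (comp_functor F G) (I * J)
       (fun ij => comp_lifting F G (mu (fst ij)) (lam (snd ij))).
Proof.
  split.
  - intros [i j]. apply comp_lifting_is_pred_lifting; [apply Hmu_lift | apply Hlam_lift].
  - apply comp_lifting_separating; assumption.
Qed.
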